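(* Define $J_T(\pi)=g_T(\pi)$ and, for $k=T-1,\dots,0$, $$J_k(\pi)=\inf_{u\in\mathcal U}\Big\{g_k(\pi,u)+E_{Y_{k+1}}\big[J_{k+1}(\Pi(\pi,u,y_{k+1}))\,\big|\,\pi,u\big]\Big\},$$ where $Y_{k+1}$ has (mass or density) function $p(y\mid\pi,u)=\sum_{i,j}B^i(y,u)A^{ij}(u)\pi(j)$. Then for every $0\le k\le T$, $J_k$ is concave on $\Delta^N$.
   Context: Controlled HMM: states $\{e_1,\dots,e_N\}$, finite control set $\mathcal U$, transition probabilities $A^{ij}(u)=p(X_{k+1}=e_i\mid X_k=e_j,U_k=u)$, measurement space $\mathcal Y$ (finite, or with densities w.r.t. a reference measure), measurement kernels $B^i(y,u)=p(Y_{k}=y\mid X_{k}=e_i,U_{k-1}=u)$. $\Delta^N=\{x\in\mathbb R^N:\sum_i x(i)=1,\ 0\le x(i)\le1\}$. Filter map: $\Pi(\pi,u,y)(i)=\frac{B^i(y,u)\sum_jA^{ij}(u)\pi(j)}{\sum_\ell\sum_jB^\ell(y,u)A^{\ell j}(u)\pi(j)}$. Costs $c_T:\{e_i\}\to[0,\infty)$, $c_k:\{e_i\}\times\mathcal U\to[0,\infty)$. Define $\tilde g_T(\pi)=-\sum_i\pi(i)\log\pi(i)$, $\tilde g_k(\pi,u)=-\sum_{i,j=1}^N A^{ij}(u)\pi(j)\log\frac{A^{ij}(u)\pi(j)}{\sum_{\ell=1}^N A^{i\ell}(u)\pi(\ell)}$ (with $0\log0=0$), $g_k(\pi,u)=\tilde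 g_k(\pi,u)+\sum_i\pi(i)c_k(e_i,u)$, $g_T(\pi)=\tilde g_T(\pi)+\sum_i\pi(i)c_T(e_i)$. $J_k$ is the value function of the belief-state reformulation of the active smoothing problem (minimising smoother entropy plus expected costs). *)

From HB Require Import structures.
From mathcomp Require Import all_boot all_order all_algebra.
From mathcomp Require Import all_classical all_reals all_analysis.
Set Implicit Arguments. Unset Strict Implicit. Unset Printing Implicit Defensive.
Import Order.TTheory GRing.Theory Num.Theory.
Local Open Scope ring_scope.

(* States e_1..e_N are indexed by 'I_N; a belief pi is a function 'I_N -> R. *)

Definition simplex (R : realType) (N : nat) (x : 'I_N -> R) : Prop :=
  (forall i, 0 <= x i) /\ \sum_(i < N) x i = 1.

Definition xlnx (R : realType) (x : R) : R := if x == 0 then 0 else x * ln x.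
Definition alnq (R : realType) (a s : R) : R := if a == 0 then 0 else a * ln (a / s).

Section Model.
Context (R : realType) (d : measure_display) (Y : measurableType d)
  (N : nat) (U : finType)
  (A : 'I_N -> 'I_N -> U -> R)   (* A i j u = p(X_{k+1}=e_i | X_k=e_j, U_k=u) *)
  (B : 'I_N -> U -> Y -> R).     (* B i u y = p(Y_k = y | X_k = e_i, U_{k-1}=u) *)

Definition pY (pi : 'I_N -> R) (u : U) (y : Y) : R :=
  \sum_(i < N) \sum_(j < N) B i u y * A i j u * pi j.

Definition filterPi (pi : 'I_N -> R) (u : U) (y : Y) : 'I_N -> R :=
  fun i => B i u y * (\sum_(j < N) A i j u * pi j) / pY pi u y.

Definition gT_tilde (pi : 'I_N -> R) : R := - \sum_(i < N) xlnx (pi i).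

Definition gk_tilde (pi : 'I_N -> R) (u : U) : R :=
  - \sum_(i < N) \sum_(j < N)
      alnq (A i j u * pi j) (\sum_(l < N) A i l u * pi l).

Definition g_T (cT : 'I_N -> R) (pi : 'I_N -> R) : R :=
  gT_tilde pi + \sum_(i < N) pi i * cT i.

Definition g_k (c : nat -> 'I_N -> U -> R) (k : nat) (pi : 'I_N -> R) (u : U) : R :=
  gk_tilde pi u + \sum_(i < N) pi i * c k i u.

(* Backward recursion: Jaux m k is the value function at time k when m = T - k
   steps remain.  Jaux 0 _ = g_T; the infimum over the finite nonempty control
   set U (u0 witnesses nonemptiness) is a minimum.  The conditional expectation
   of J_{k+1}(Pi(pi,u,Y_{k+1})) is the integral against the density p(y|pi,u)
   w.r.t. the reference measure mu (counting measure for finite Y). *)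
Fixpoint Jaux (mu : {measure set Y -> \bar R}) (u0 : U)
    (cT : 'I_N -> R) (c : nat -> 'I_N -> U -> R) (m k : nat) {struct m}
    : ('I_N -> R) -> R :=
  match m with
  | 0 => g_T cT
  | m'.+1 => fun pi =>
      let Q := fun u : U =>
        g_k c k pi u
        + fine (\int[mu]_y ((Jaux mu u0 cT c m' k.+1 (filterPi pi u y))
                             * pY pi u y)%:E) in
      \big[Num.min/Q u0]_(u : U) Q u
  end.

Definition J (mu : {measure set Y -> \bar R}) (u0 : U) (cT : 'I_N -> R)
    (c : nat -> 'I_N -> U -> R) (T k : nat) : ('I_N -> R) -> R :=
  Jaux mu u0 cT c (T - k) k.

End Model.

Definition concave_on_simplex (R : realType) (N : nat) (f : ('I_N -> R) -> R) : Prop :=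
  forall (p1 p2 : 'I_N -> R) (t : R), simplex p1 -> simplex p2 -> 0 <= t <= 1 ->
    t * f p1 + (1 - t) * f p2 <= f (fun i => t * p1 i + (1 - t) * p2 i).

From HB Require Import structures.
From mathcomp Require Import all_boot all_order all_algebra.
From mathcomp Require Import all_classical all_reals all_analysis.
From mathcomp Require Import measurable_realfun ring lra.
Import Order.TTheory GRing.Theory Num.Theory.
Local Open Scope ring_scope.
Set Implicit Arguments. Unset Strict Implicit. Unset Printing Implicit Defensive.

(* The proof is a backward induction on the number m of remaining steps, with
   the invariant "Jaux m k is concave and bounded (between 0 and some M) on the
   simplex".  The ingredients, developed in this order, are:
   - the scalar function alnq a s = a ln (a/s) is jointly convex (log-sum
     inequality); hence both entropy terms gT_tilde and gk_tilde are concave;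
   - the perspective n |-> |n| f(n/|n|) of a concave function f on the
     simplex is positively homogeneous and superadditive on the nonnegative
     orthant, hence concave there;
   - the integrand J(Pi(pi,u,y)) p(y|pi,u) is exactly the perspective of J at
     the unnormalised filter vector, which is linear in pi; so it is concave
     in pi, and bounded by M * sum_i B^i(y,u);
   - the (possibly non-measurable) Lebesgue integral of nonnegative functions
     is monotone and superlinear, so the expectation stays concave, and it is
     finite because each B^i(.,u) integrates to 1;
   - a pointwise minimum over the finite control set preserves concavity.
   The conclusion holds for every k. *)

Lemma ln_le_subr1 (R : realType) (x : R) : 0 < x -> ln x <= x - 1.
Proof.
move=> x0; have := expR_ge1Dx (ln x); rewrite lnK ?posrE // => h.
by rewrite lerBrDl.
Qed.

(* Tangent-line bound: for any positive ratio C/S, alnq c s lies above the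
   affine minorant obtained from ln y <= y - 1 at y = (C/S)/(c/s). *)
Lemma alnq_tangent (R : realType) (C S c s : R) : 0 < C -> 0 < S -> 0 <= c -> c <= s ->
  c * ln (C / S) + c - s * (C / S) <= alnq c s.
Proof.
move=> C0 S0 c0 cs; rewrite /alnq; have [c_0|cn0] := eqVneq c 0.
  rewrite c_0 mul0r add0r subr_le0; apply: mulr_ge0; first exact: le_trans c0 cs.
  by rewrite divr_ge0 ?ltW.
have cp : 0 < c by rewrite lt0r cn0.
have sp : 0 < s by apply: lt_le_trans cs.
have CSp : 0 < C / S by rewrite divr_gt0.
have csp : 0 < c / s by rewrite divr_gt0.
set ratio := (C / S) / (c / s).
have hln : ln (C / S) - ln (c / s) <= ratio - 1.
  by rewrite -ln_div ?posrE //; exact: ln_le_subr1 (divr_gt0 CSp csp).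
have -> : s * (C / S) = c * ratio by rewrite /ratio; field; rewrite !gt_eqF.
have := ler_wpM2l (ltW cp) hln; lra.
Qed.

Lemma alnq_subadditive (R : realType) (x y u v : R) :
  0 <= x -> x <= u -> 0 <= y -> y <= v ->
  alnq (x + y) (u + v) <= alnq x u + alnq y v.
Proof.
move=> x0 xu y0 yv; have [xy0|xyn0] := eqVneq (x + y) 0.
  have [-> ->] : x = 0 /\ y = 0 by split; lra.
  by rewrite /alnq addr0 eqxx addr0.
have C0 : 0 < x + y by rewrite lt0r xyn0 addr_ge0.
have S0 : 0 < u + v by lra.
rewrite {1}/alnq (negbTE xyn0).
have -> : (x + y) * ln ((x + y) / (u + v)) =
    (x * ln ((x + y) / (u + v)) + x - u * ((x + y) / (u + v))) +
    (y * ln ((x + y) / (u + v)) + y - v * ((x + y) / (u + v))).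
  by field; rewrite gt_eqF.
by apply: lerD; apply: alnq_tangent.
Qed.

Lemma alnq_homogeneous (R : realType) (t c s : R) :
  0 <= t -> alnq (t * c) (t * s) = t * alnq c s.
Proof.
move=> t0; rewrite /alnq; have [->|tn0] := eqVneq t 0; first by rewrite !mul0r eqxx.
rewrite mulf_eq0 (negbTE tn0) /=; case: eqP => [_|_]; first by rewrite mulr0.
by rewrite -mulrA invfM mulrACA mulfV // mul1r.
Qed.

Lemma alnq_convex (R : realType) (x y u v t : R) :
  0 <= x -> x <= u -> 0 <= y -> y <= v -> 0 <= t <= 1 ->
  alnq (t * x + (1 - t) * y) (t * u + (1 - t) * v) <= t * alnq x u + (1 - t) * alnq y v.
Proof.
move=> x0 xu y0 yv /andP[t0 t1].
have t1' : 0 <= 1 - t by rewrite subr_ge0.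
rewrite -!alnq_homogeneous //.
by apply: alnq_subadditive; rewrite ?mulr_ge0 ?ler_wpM2l.
Qed.

Lemma alnq_bounds (R : realType) (a s : R) : 0 <= a -> a <= s -> a - s <= alnq a s <= 0.
Proof.
move=> a0 as_; apply/andP; split.
  have := @alnq_tangent R 1 1 a s ltr01 ltr01 a0 as_.
  by rewrite divr1 ln1 mulr0 add0r mulr1.
rewrite /alnq; case: eqP => // /eqP an0.
have ap : 0 < a by rewrite lt0r an0.
by rewrite pmulr_rle0 // ln_le0 // ler_pdivrMr ?mul1r // (lt_le_trans ap).
Qed.

Lemma xlnx_alnq (R : realType) (x : R) : xlnx x = alnq x 1.
Proof. by rewrite /xlnx /alnq divr1. Qed.

Lemma simplex_le1 (R : realType) N (p : 'I_N -> R) : simplex p -> forall i, p i <= 1.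
Proof. by move=> [p0 <-] i; rewrite (bigD1 i) //= lerDl sumr_ge0. Qed.

Lemma simplex_convex (R : realType) N (p1 p2 : 'I_N -> R) t :
  simplex p1 -> simplex p2 -> 0 <= t <= 1 -> simplex (fun i => t * p1 i + (1 - t) * p2 i).
Proof.
move=> [p10 s1] [p20 s2] /andP[t0 t1]; split.
  by move=> i; rewrite addr_ge0 // mulr_ge0 // subr_ge0.
by rewrite big_split /= -!mulr_sumr s1 s2 !mulr1 addrC subrK.
Qed.

Lemma simplex_normalize (R : realType) N (n : 'I_N -> R) : (forall i, 0 <= n i) ->
  0 < \sum_(j < N) n j -> simplex (fun i => n i / \sum_(j < N) n j).
Proof.
move=> n0 Sp; split; first by move=> i; rewrite divr_ge0 // ltW.
by rewrite -mulr_suml mulfV // lt0r_neq0.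
Qed.

Lemma weighted_sum_le1 (R : realType) N (w p : 'I_N -> R) :
  (forall j, 0 <= w j <= 1) -> simplex p -> \sum_(j < N) w j * p j <= 1.
Proof.
move=> w01 [p0 <-]; apply: ler_sum => j _.
by case/andP: (w01 j) => w0 w1; rewrite ler_piMl.
Qed.

Lemma weighted_sum_affine (R : realType) N (w p1 p2 : 'I_N -> R) t :
  \sum_(j < N) w j * (t * p1 j + (1 - t) * p2 j) =
  t * \sum_(j < N) w j * p1 j + (1 - t) * \sum_(j < N) w j * p2 j.
Proof. by rewrite !mulr_sumr -big_split /=; apply: eq_bigr => j _; ring. Qed.

Lemma term_le_weighted_sum (R : realType) N (w p : 'I_N -> R) j :
  (forall l, 0 <= w l) -> (forall l, 0 <= p l) -> w j * p j <= \sum_(l < N) w l * p l.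
Proof.
move=> w0 p0; rewrite (bigD1 j) //= lerDl.
by apply: sumr_ge0 => l _; apply: mulr_ge0.
Qed.

(* f takes values in [0, M] on the simplex; boundedness is carried through the
   induction to keep the expectations finite. *)
Definition bounded_on_simplex (R : realType) N (f : ('I_N -> R) -> R) (M : R) : Prop :=
  forall p, simplex p -> 0 <= f p <= M.

Lemma concave_add (R : realType) N (f g : ('I_N -> R) -> R) :
  concave_on_simplex f -> concave_on_simplex g -> concave_on_simplex (fun p => f p + g p).
Proof.
move=> cf cg p1 p2 t s1 s2 t01.
have := cf _ _ _ s1 s2 t01; have := cg _ _ _ s1 s2 t01; lra.
Qed.

Lemma concave_linear (R : realType) N (w : 'I_N -> R) :
  concave_on_simplex (fun p => \sum_(i < N) p i * w i).
Proof.
move=> p1 p2 t _ _ _; rewrite le_eqVlt; apply/orP; left; apply/eqP.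
by rewrite !mulr_sumr -big_split /=; apply: eq_bigr => i _; ring.
Qed.

Lemma bounded_add (R : realType) N (f g : ('I_N -> R) -> R) (Mf Mg : R) :
  bounded_on_simplex f Mf -> bounded_on_simplex g Mg ->
  bounded_on_simplex (fun p => f p + g p) (Mf + Mg).
Proof.
move=> bf bg p sp; have /andP[f0 fM] := bf p sp; have /andP[g0 gM] := bg p sp.
by rewrite addr_ge0 ?lerD.
Qed.

Lemma linear_cost_bounded (R : realType) N (w : 'I_N -> R) : (forall i, 0 <= w i) ->
  bounded_on_simplex (fun p => \sum_(i < N) p i * w i) (\sum_(i < N) w i).
Proof.
move=> w0 p sp; have [p0 _] := sp; apply/andP; split.
  by apply: sumr_ge0 => i _; rewrite mulr_ge0.
by apply: ler_sum => i _; rewrite ler_piMl ?simplex_le1.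
Qed.

Lemma bigmin_concave (R : realType) N (I : finType) (i0 : I) (Q : I -> ('I_N -> R) -> R) :
  (forall i, concave_on_simplex (Q i)) ->
  concave_on_simplex (fun p => \big[Num.min/Q i0 p]_(i : I) Q i p).
Proof.
move=> cQ p1 p2 t s1 s2 t01; have /andP[t0 t1] := t01.
apply: le_bigmin => [|i _]; [move: (i0) | move: i] => i.
all: apply: le_trans (cQ i _ _ _ s1 s2 t01).
all: by apply: lerD; apply: ler_wpM2l; rewrite ?subr_ge0 ?bigmin_le.
Qed.

Lemma bigmin_bounded (R : realType) N (I : finType) (i0 : I) (Q : I -> ('I_N -> R) -> R) M :
  (forall i p, simplex p -> 0 <= Q i p) -> bounded_on_simplex (Q i0) M ->
  bounded_on_simplex (fun p => \big[Num.min/Q i0 p]_(i : I) Q i p) M.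
Proof.
move=> Q0 bQ p sp; apply/andP; split; first by apply: le_bigmin => [|i _]; apply: Q0.
by apply: le_trans (bigmin_le _ i0 _) _; case/andP: (bQ p sp).
Qed.

(* The perspective of f : n |-> f(n / |n|) |n|, with |n| = sum_j n j.  For
   n = 0 it is 0 whatever value f takes at the ill-defined point 0/0. *)
Definition perspective (R : realType) N (f : ('I_N -> R) -> R) (n : 'I_N -> R) : R :=
  f (fun i => n i / \sum_(j < N) n j) * \sum_(j < N) n j.

Lemma perspectiveZ (R : realType) N (f : ('I_N -> R) -> R) (n : 'I_N -> R) (a : R) :
  0 <= a -> perspective f (fun i => a * n i) = a * perspective f n.
Proof.
move=> a0; rewrite /perspective -mulr_sumr.
have [->|an0] := eqVneq a 0; first by rewrite !(mul0r, mulr0).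
have -> : (fun i => a * n i / (a * \sum_(j < N) n j)) = (fun i => n i / \sum_(j < N) n j).
  by apply: funext => i; rewrite invfM mulrACA mulfV // mul1r.
by rewrite mulrCA.
Qed.

(* Superadditivity of the perspective of a concave function: split
   (n1 + n2)/|n1 + n2| as the convex combination of n1/|n1| and n2/|n2| with
   weight |n1| / (|n1| + |n2|). *)
Lemma perspective_superadditive (R : realType) N (f : ('I_N -> R) -> R) (n1 n2 : 'I_N -> R) :
  concave_on_simplex f -> (forall i, 0 <= n1 i) -> (forall i, 0 <= n2 i) ->
  perspective f n1 + perspective f n2 <= perspective f (fun i => n1 i + n2 i).
Proof.
move=> cf n10 n20; rewrite /perspective big_split /=.
set S1 := \sum_(j < N) n1 j; set S2 := \sum_(j < N) n2 j.
have [S1_0|S1n0] := eqVneq S1 0.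
  have n1_0 i : n1 i = 0 by apply: (psumr_eq0P (fun j _ => n10 j) S1_0).
  have -> : (fun i => (n1 i + n2 i) / (S1 + S2)) = (fun i => n2 i / S2).
    by apply: funext => i; rewrite n1_0 S1_0 !add0r.
  by rewrite S1_0 mulr0 !add0r.
have [S2_0|S2n0] := eqVneq S2 0.
  have n2_0 i : n2 i = 0 by apply: (psumr_eq0P (fun j _ => n20 j) S2_0).
  have -> : (fun i => (n1 i + n2 i) / (S1 + S2)) = (fun i => n1 i / S1).
    by apply: funext => i; rewrite n2_0 S2_0 !addr0.
  by rewrite S2_0 mulr0 !addr0.
have S1p : 0 < S1 by rewrite lt0r S1n0 sumr_ge0.
have S2p : 0 < S2 by rewrite lt0r S2n0 sumr_ge0.
have S12n0 : S1 + S2 != 0 by rewrite gt_eqF // addr_gt0.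
set l := S1 / (S1 + S2).
have l01 : 0 <= l <= 1.
  apply/andP; split; first by rewrite divr_ge0 ?ltW // addr_gt0.
  by rewrite ler_pdivrMr ?addr_gt0 // mul1r lerDl ltW.
have -> : (fun i => (n1 i + n2 i) / (S1 + S2)) =
    (fun i => l * (n1 i / S1) + (1 - l) * (n2 i / S2)).
  by apply: funext => i; rewrite /l; field; rewrite S1n0 S2n0 S12n0.
have := cf _ _ l (simplex_normalize n10 S1p) (simplex_normalize n20 S2p) l01.
move/(ler_wpM2r (ltW (addr_gt0 S1p S2p))); apply: le_trans.
by rewrite le_eqVlt; apply/orP; left; apply/eqP; rewrite /l; field.
Qed.

Lemma perspective_concave (R : realType) N (f : ('I_N -> R) -> R) (n1 n2 : 'I_N -> R) t :
  concave_on_simplex f -> (forall i, 0 <= n1 i) -> (forall i, 0 <= n2 i) -> 0 <= t <= 1 ->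
  t * perspective f n1 + (1 - t) * perspective f n2 <=
  perspective f (fun i => t * n1 i + (1 - t) * n2 i).
Proof.
move=> cf n10 n20 /andP[t0 t1]; have t1' : 0 <= 1 - t by rewrite subr_ge0.
rewrite -(perspectiveZ f n1 t0) -(perspectiveZ f n2 t1').
by apply: perspective_superadditive => // i; apply: mulr_ge0.
Qed.

Lemma perspective_bounded (R : realType) N (f : ('I_N -> R) -> R) (n : 'I_N -> R) M :
  0 <= M -> bounded_on_simplex f M -> (forall i, 0 <= n i) ->
  0 <= perspective f n <= M * \sum_(j < N) n j.
Proof.
move=> M0 bf n0; rewrite /perspective.
have [->|Sn0] := eqVneq (\sum_(j < N) n j) 0; first by rewrite !mulr0 lexx.
have Sp : 0 < \sum_(j < N) n j by rewrite lt0r Sn0 sumr_ge0.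
have /andP[f0 fM] := bf _ (simplex_normalize n0 Sp).
by rewrite mulr_ge0 ?ler_wpM2r // ltW.
Qed.

(* The integrands below need not be measurable (nothing is assumed about the
   measurability of the value functions), so both facts are proved from the
   definition of the integral as a supremum over simple minorants. *)
Section NonnegIntegral.
Local Open Scope classical_set_scope.
Local Open Scope ereal_scope.
Import HBNNSimple.
Context (d : measure_display) (Y : measurableType d) (R : realType)
  (mu : {measure set Y -> \bar R}).

Lemma integral_monotone (f g : Y -> \bar R) : (forall y, 0 <= f y) ->
  (forall y, f y <= g y) -> \int[mu]_y f y <= \int[mu]_y g y.
Proof.
move=> f0 fg; have g0 y : 0 <= g y by apply: le_trans (f0 y) (fg y).
rewrite (ge0_integralTE mu f0) (ge0_integralTE mu g0) /=.
apply: ge_ereal_sup => _ [h hf <-]; apply: ereal_sup_ubound; exists h => //= y.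
exact: le_trans (hf y) (fg y).
Qed.

Lemma ereal_supD_le (X Z : set (\bar R)) (z : \bar R) :
  X !=set0 -> Z !=set0 -> (forall x, X x -> 0 <= x) -> (forall y, Z y -> 0 <= y) ->
  (forall x y, X x -> Z y -> x + y <= z) -> ereal_sup X + ereal_sup Z <= z.
Proof.
move=> [x0 Xx0] [y0 Zy0] X0 Z0 XZz.
have z0 : 0 <= z.
  by apply: le_trans (XZz _ _ Xx0 Zy0); exact: adde_ge0 (X0 _ Xx0) (Z0 _ Zy0).
case: z z0 XZz => [r| |] z0 XZz; [|exact: leey|by []].
have supX_le y : Z y -> ereal_sup X + y <= r%:E.
  move=> Zy; rewrite -lee_suber_addr //; apply: ge_ereal_sup => x Xx.
  by rewrite lee_suber_addr //; exact: XZz.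
rewrite addeC -lee_suber_addr //; apply: ge_ereal_sup => y Zy.
by rewrite lee_suber_addr // addeC; exact: supX_le.
Qed.

(* a int f + b int g <= int (a f + b g): a pair of simple minorants of f and g
   yields a simple minorant of a f + b g. *)
Lemma integral_superlinear (f g : Y -> \bar R) (a b : R) : (0 <= a)%R -> (0 <= b)%R ->
  (forall y, 0 <= f y) -> (forall y, 0 <= g y) ->
  a%:E * \int[mu]_y f y + b%:E * \int[mu]_y g y <= \int[mu]_y (a%:E * f y + b%:E * g y).
Proof.
move=> a0 b0 f0 g0.
rewrite (ge0_integralTE mu f0) (ge0_integralTE mu g0) /=.
have zero_minorant (h : Y -> \bar R) : (forall y, 0 <= h y) ->
    [set sintegral mu s | s in [set s : {nnsfun Y >-> R} | forall x, (s x)%:E <= h x]]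
    (sintegral mu (@nnsfun0 _ Y R)).
  by move=> h0; exists nnsfun0.
have simple_ge0 (s : {nnsfun Y >-> R}) c : (0 <= c)%R -> 0 <= c%:E * sintegral mu s.
  by move=> c0; rewrite mule_ge0 ?lee_fin ?sintegral_ge0.
rewrite -!ereal_supZl //; try by apply/set0P; eexists; apply: zero_minorant.
apply: ereal_supD_le.
- by eexists; exists (sintegral mu (@nnsfun0 _ Y R)); first exact: zero_minorant.
- by eexists; exists (sintegral mu (@nnsfun0 _ Y R)); first exact: zero_minorant.
- by move=> _ [_ [s _ <-] <-]; apply: simple_ge0.
- by move=> _ [_ [s _ <-] <-]; apply: simple_ge0.
move=> _ _ [_ [s1 s1f <-] <-] [_ [s2 s2g <-] <-].
have s_meas (s : {nnsfun Y >-> R}) : measurable_fun [set: Y] (fun y => (s y : R)%:E).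
  by apply/measurable_EFinP; exact: measurable_funPT.
have s_ge0 (s : {nnsfun Y >-> R}) y : [set: Y] y -> 0 <= (s y : R)%:E.
  by move=> _; rewrite lee_fin.
rewrite -(patch_setT (fun _ => 0%R) s1) -(patch_setT (fun _ => 0%R) s2).
rewrite -!integral_nnsfun // -!ge0_integralZl_EFin //; try exact: s_meas; try exact: s_ge0.
rewrite -ge0_integralD //; first last.
- by apply: measurable_funeM; exact: s_meas.
- by move=> y _; rewrite mule_ge0 // lee_fin.
- by apply: measurable_funeM; exact: s_meas.
- by move=> y _; rewrite mule_ge0 // lee_fin.
apply: integral_monotone => y; first by rewrite adde_ge0 // mule_ge0 // lee_fin.
by apply: leeD; apply: lee_wpmul2l; rewrite ?lee_fin.
Qed.
End NonnegIntegral.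

Lemma xlnx_convex (R : realType) (x y t : R) : 0 <= x -> x <= 1 -> 0 <= y -> y <= 1 ->
  0 <= t <= 1 -> xlnx (t * x + (1 - t) * y) <= t * xlnx x + (1 - t) * xlnx y.
Proof.
move=> x0 x1 y0 y1 t01; rewrite !xlnx_alnq.
have {2}-> : (1 : R) = t * 1 + (1 - t) * 1 by ring.
exact: alnq_convex.
Qed.

Lemma entropy_concave (R : realType) N : concave_on_simplex (@gT_tilde R N).
Proof.
move=> p1 p2 t s1 s2 t01; rewrite /gT_tilde.
suff : \sum_(i < N) xlnx (t * p1 i + (1 - t) * p2 i) <=
    t * \sum_(i < N) xlnx (p1 i) + (1 - t) * \sum_(i < N) xlnx (p2 i) by lra.
rewrite !mulr_sumr -big_split /=; apply: ler_sum => i _.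
by case: (s1) (s2) => [p10 _] [p20 _]; apply: xlnx_convex; rewrite ?simplex_le1.
Qed.

Lemma entropy_bounded (R : realType) N : bounded_on_simplex (@gT_tilde R N) N%:R.
Proof.
move=> p sp; have [p0 _] := sp; rewrite /gT_tilde -sumrN.
have xlnx_bounds i : p i - 1 <= xlnx (p i) <= 0.
  by rewrite xlnx_alnq; apply: alnq_bounds; rewrite ?simplex_le1.
apply/andP; split.
  by apply: sumr_ge0 => i _; rewrite oppr_ge0; case/andP: (xlnx_bounds i).
rewrite -[N in N%:R]card_ord -sumr_const; apply: ler_sum => i _.
by case/andP: (xlnx_bounds i) => lb _; have := p0 i; lra.
Qed.

Lemma terminal_cost_concave (R : realType) N (cT : 'I_N -> R) :
  concave_on_simplex (g_T cT).
Proof. exact: concave_add (@entropy_concave R N) (concave_linear cT). Qed.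

Lemma terminal_cost_bounded (R : realType) N (cT : 'I_N -> R) : (forall i, 0 <= cT i) ->
  bounded_on_simplex (g_T cT) (N%:R + \sum_(i < N) cT i).
Proof. by move=> cT0; apply: bounded_add (@entropy_bounded R N) (linear_cost_bounded cT0). Qed.

Section ActiveSmoothing.
Variables (R : realType) (d : measure_display) (Y : measurableType d)
  (mu : {measure set Y -> \bar R}) (N : nat) (U : finType) (u0 : U)
  (A : 'I_N -> 'I_N -> U -> R) (B : 'I_N -> U -> Y -> R)
  (cT : 'I_N -> R) (c : nat -> 'I_N -> U -> R).
Hypothesis A_ge0 : forall i j u, 0 <= A i j u.
Hypothesis A_sum1 : forall j u, \sum_(i < N) A i j u = 1.
Hypothesis B_ge0 : forall i u y, 0 <= B i u y.
Hypothesis B_meas : forall i u, measurable_fun setT (B i u).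
Hypothesis B_int1 : forall i u, (\int[mu]_y (B i u y)%:E = 1)%E.
Hypothesis cT_ge0 : forall i, 0 <= cT i.
Hypothesis c_ge0 : forall k i u, 0 <= c k i u.

Lemma A_le1 i j u : A i j u <= 1.
Proof. by rewrite -(A_sum1 j u) (bigD1 i) //= lerDl sumr_ge0. Qed.

Lemma predicted_bounds (p : 'I_N -> R) u i : simplex p ->
  0 <= \sum_(j < N) A i j u * p j <= 1.
Proof.
move=> sp; have [p0 _] := sp; apply/andP; split.
  by apply: sumr_ge0 => j _; rewrite mulr_ge0.
by apply: weighted_sum_le1 => // j; rewrite A_ge0 A_le1.
Qed.

(* The entropy term of a stage is concave: it is a sum of terms
   -alnq (A^ij pi_j) ((A pi)_i), each jointly convex and linear in pi. *)
Lemma stage_entropy_concave u : concave_on_simplex (fun p => gk_tilde A p u).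
Proof.
move=> p1 p2 t [p10 _] [p20 _] t01; rewrite /gk_tilde.
suff : \sum_(i < N) \sum_(j < N) alnq (A i j u * (t * p1 j + (1 - t) * p2 j))
      (\sum_(l < N) A i l u * (t * p1 l + (1 - t) * p2 l)) <=
    t * \sum_(i < N) \sum_(j < N) alnq (A i j u * p1 j) (\sum_(l < N) A i l u * p1 l) +
    (1 - t) * \sum_(i < N) \sum_(j < N) alnq (A i j u * p2 j) (\sum_(l < N) A i l u * p2 l)
  by lra.
rewrite !mulr_sumr -big_split /=; apply: ler_sum => i _.
rewrite !mulr_sumr -big_split /=; apply: ler_sum => j _.
rewrite weighted_sum_affine.
have -> : A i j u * (t * p1 j + (1 - t) * p2 j) =
    t * (A i j u * p1 j) + (1 - t) * (A i j u * p2 j) by ring.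
by apply: alnq_convex; rewrite ?mulr_ge0 ?term_le_weighted_sum.
Qed.

(* Each of the N^2 terms of the stage entropy lies in [0, 1]. *)
Lemma stage_entropy_bounded u :
  bounded_on_simplex (fun p => gk_tilde A p u) (N%:R * N%:R).
Proof.
move=> p sp; have [p0 _] := sp; rewrite /gk_tilde -sumrN.
have alnq_bounds_ij i j : A i j u * p j - \sum_(l < N) A i l u * p l <=
    alnq (A i j u * p j) (\sum_(l < N) A i l u * p l) <= 0.
  by apply: alnq_bounds; rewrite ?mulr_ge0 ?term_le_weighted_sum.
apply/andP; split.
  apply: sumr_ge0 => i _; rewrite oppr_ge0; apply: sumr_le0 => j _.
  by case/andP: (alnq_bounds_ij i j).
have sum_N : \sum_(i < N) (N%:R : R) = N%:R * N%:R.
  by rewrite sumr_const card_ord mulr_natl.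
have sum_1 : \sum_(j < N) (1 : R) = N%:R by rewrite sumr_const card_ord.
rewrite -sum_N; apply: ler_sum => i _.
rewrite -sumrN -sum_1; apply: ler_sum => j _.
have /andP[_ pred_le1] := predicted_bounds u i sp.
have aij0 : 0 <= A i j u * p j by rewrite mulr_ge0.
by case/andP: (alnq_bounds_ij i j) => lb _; lra.
Qed.

Lemma stage_cost_concave k u : concave_on_simplex (fun p => g_k A c k p u).
Proof. exact: concave_add (stage_entropy_concave u) (concave_linear (c k ^~ u)). Qed.

Lemma stage_cost_bounded k u :
  bounded_on_simplex (fun p => g_k A c k p u) (N%:R * N%:R + \sum_(i < N) c k i u).
Proof.
exact: bounded_add (stage_entropy_bounded u) (linear_cost_bounded (c_ge0 k ^~ u)).
Qed.

(* The unnormalised filter B^i(y,u) (A(u) pi)_i: its total mass is the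
   likelihood p(y | pi, u) and normalising it gives the filter Pi(pi, u, y). *)
Definition unnormalized_filter (p : 'I_N -> R) (u : U) (y : Y) (i : 'I_N) : R :=
  B i u y * \sum_(j < N) A i j u * p j.

Lemma pY_unnormalized_filter p u y :
  pY A B p u y = \sum_(i < N) unnormalized_filter p u y i.
Proof.
apply: eq_bigr => i _; rewrite /unnormalized_filter mulr_sumr.
by apply: eq_bigr => j _; rewrite mulrA.
Qed.

Lemma weighted_value_perspective (Jm : ('I_N -> R) -> R) p u y :
  Jm (filterPi A B p u y) * pY A B p u y = perspective Jm (unnormalized_filter p u y).
Proof. by rewrite /perspective -pY_unnormalized_filter. Qed.

Lemma unnormalized_filter_ge0 p u y : simplex p -> forall i, 0 <= unnormalized_filter p u y i.
Proof. by move=> sp i; rewrite mulr_ge0 //; case/andP: (predicted_bounds u i sp). Qed.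

Lemma unnormalized_filter_mass_le p u y : simplex p ->
  \sum_(i < N) unnormalized_filter p u y i <= \sum_(i < N) B i u y.
Proof.
move=> sp; apply: ler_sum => i _; rewrite ler_piMr //.
by case/andP: (predicted_bounds u i sp).
Qed.

Lemma unnormalized_filter_affine p1 p2 t u y :
  unnormalized_filter (fun j => t * p1 j + (1 - t) * p2 j) u y =
  (fun i => t * unnormalized_filter p1 u y i + (1 - t) * unnormalized_filter p2 u y i).
Proof. by apply: funext => i; rewrite /unnormalized_filter weighted_sum_affine; ring. Qed.

Lemma weighted_value_concave (Jm : ('I_N -> R) -> R) p1 p2 t u y :
  concave_on_simplex Jm -> simplex p1 -> simplex p2 -> 0 <= t <= 1 ->
  t * (Jm (filterPi A B p1 u y) * pY A B p1 u y) +
  (1 - t) * (Jm (filterPi A B p2 u y) * pY A B p2 u y) <=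
  Jm (filterPi A B (fun i => t * p1 i + (1 - t) * p2 i) u y) *
     pY A B (fun i => t * p1 i + (1 - t) * p2 i) u y.
Proof.
move=> cJ s1 s2 t01; rewrite !weighted_value_perspective unnormalized_filter_affine.
by apply: perspective_concave => //; apply: unnormalized_filter_ge0.
Qed.

Lemma weighted_value_bounded (Jm : ('I_N -> R) -> R) M p u y :
  0 <= M -> bounded_on_simplex Jm M -> simplex p ->
  0 <= Jm (filterPi A B p u y) * pY A B p u y <= M * \sum_(i < N) B i u y.
Proof.
move=> M0 bJ sp; rewrite weighted_value_perspective.
have /andP[-> le_mass] := perspective_bounded M0 bJ (unnormalized_filter_ge0 u y sp).
by rewrite (le_trans le_mass) // ler_wpM2l ?unnormalized_filter_mass_le.
Qed.

Definition expected_value (Jm : ('I_N -> R) -> R) (p : 'I_N -> R) (u : U) : R :=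
  fine (\int[mu]_y (Jm (filterPi A B p u y) * pY A B p u y)%:E).

(* Each B^i(., u) is a probability density, so M sum_i B^i integrates to M N. *)
Lemma integral_kernel_sum M u : 0 <= M ->
  (\int[mu]_y (M * \sum_(i < N) B i u y)%:E = (M * N%:R)%:E)%E.
Proof.
move=> M0; have B_meas_E i : measurable_fun setT (fun y => (B i u y)%:E).
  by apply/measurable_EFinP; exact: B_meas.
transitivity (\int[mu]_y (M%:E * \sum_(i < N) (B i u y)%:E))%E.
  by apply: eq_integral => y _; rewrite EFinM sumEFin.
rewrite ge0_integralZl_EFin //; first last.
- exact: emeasurable_sum.
- by move=> y _; rewrite sumEFin lee_fin sumr_ge0.
rewrite ge0_integral_sum // => [|i y _]; last by rewrite lee_fin.
rewrite (eq_bigr (fun _ => 1%E)) => [|i _]; last exact: B_int1.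
by rewrite sumEFin sumr_const card_ord -EFinM.
Qed.

(* For J bounded by M the expectation integral lies in [0, M N]; in
   particular it is finite, so taking its real part loses nothing. *)
Lemma expected_integral_bounds (Jm : ('I_N -> R) -> R) M p u :
  0 <= M -> bounded_on_simplex Jm M -> simplex p ->
  (0 <= \int[mu]_y (Jm (filterPi A B p u y) * pY A B p u y)%:E <= (M * N%:R)%:E)%E.
Proof.
move=> M0 bJ sp; have wv_bounds y := weighted_value_bounded u y M0 bJ sp.
apply/andP; split.
  by apply: integral_ge0 => y _; rewrite lee_fin; case/andP: (wv_bounds y).
rewrite -(integral_kernel_sum u M0).
by apply: integral_monotone => y; rewrite lee_fin; case/andP: (wv_bounds y).
Qed.

Lemma expected_integral_fin_num (Jm : ('I_N -> R) -> R) M p u :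
  0 <= M -> bounded_on_simplex Jm M -> simplex p ->
  (\int[mu]_y (Jm (filterPi A B p u y) * pY A B p u y)%:E)%E \is a fin_num.
Proof.
move=> M0 bJ sp; have /andP[I0 IM] := expected_integral_bounds u M0 bJ sp.
by rewrite ge0_fin_numE // (le_lt_trans IM) // ltry.
Qed.

Lemma expected_value_bounded (Jm : ('I_N -> R) -> R) M u :
  0 <= M -> bounded_on_simplex Jm M ->
  bounded_on_simplex (fun p => expected_value Jm p u) (M * N%:R).
Proof.
move=> M0 bJ p sp; have /andP[I0 IM] := expected_integral_bounds u M0 bJ sp.
by rewrite -!lee_fin fineK ?I0 ?IM // (expected_integral_fin_num u M0 bJ sp).
Qed.

(* Concavity passes through the expectation by superlinearity of the integral. *)
Lemma expected_value_concave (Jm : ('I_N -> R) -> R) M u :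
  0 <= M -> bounded_on_simplex Jm M -> concave_on_simplex Jm ->
  concave_on_simplex (fun p => expected_value Jm p u).
Proof.
move=> M0 bJ cJ p1 p2 t s1 s2 t01; have /andP[t0 t1] := t01.
have wv_ge0 p y : simplex p -> (0 <= (Jm (filterPi A B p u y) * pY A B p u y)%:E)%E.
  by move=> sp; rewrite lee_fin; case/andP: (weighted_value_bounded u y M0 bJ sp).
have fin p := @expected_integral_fin_num Jm M p u M0 bJ.
rewrite /expected_value -lee_fin EFinD !EFinM !fineK ?fin //; last exact: simplex_convex.
have t1' : 0 <= 1 - t by rewrite subr_ge0.
apply: le_trans (integral_superlinear mu t0 t1' (wv_ge0 p1 ^~ s1) (wv_ge0 p2 ^~ s2)) _.
apply: integral_monotone => y.
  by apply: adde_ge0; apply: mule_ge0; rewrite ?lee_fin //; exact: wv_ge0.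
by rewrite -!EFinM -EFinD lee_fin; apply: weighted_value_concave.
Qed.

Lemma value_function_concave_bounded m k :
  concave_on_simplex (Jaux A B mu u0 cT c m k) /\
  exists M, 0 <= M /\ bounded_on_simplex (Jaux A B mu u0 cT c m k) M.
Proof.
elim: m k => [|m IH] k.
  split; first exact: terminal_cost_concave.
  exists (N%:R + \sum_(i < N) cT i); split; last exact: terminal_cost_bounded.
  by rewrite addr_ge0 ?sumr_ge0.
have [cJ [M [M0 bJ]]] := IH k.+1.
pose Q u p := g_k A c k p u + expected_value (Jaux A B mu u0 cT c m k.+1) p u.
have -> : Jaux A B mu u0 cT c m.+1 k = fun p => \big[Num.min/Q u0 p]_(u : U) Q u p by [].
have Q_concave u : concave_on_simplex (Q u).
  exact: concave_add (stage_cost_concave k u) (expected_value_concave u M0 bJ cJ).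
have Q_bounded u : bounded_on_simplex (Q u)
    (N%:R * N%:R + \sum_(i < N) c k i u + M * N%:R).
  exact: bounded_add (stage_cost_bounded k u) (expected_value_bounded u M0 bJ).
split; first exact: bigmin_concave.
exists (N%:R * N%:R + \sum_(i < N) c k i u0 + M * N%:R); split.
  by rewrite !addr_ge0 ?mulr_ge0 ?sumr_ge0.
by apply: bigmin_bounded => // u p sp; case/andP: (Q_bounded u p sp).
Qed.
End ActiveSmoothing.

Theorem theorem2 (R : realType) (d : measure_display) (Y : measurableType d)
  (mu : {measure set Y -> \bar R}) (N : nat) (U : finType) (u0 : U)
  (A : 'I_N -> 'I_N -> U -> R) (B : 'I_N -> U -> Y -> R)
  (cT : 'I_N -> R) (c : nat -> 'I_N -> U -> R) (T : nat) :
  (forall i j u, 0 <= A i j u) ->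
  (forall j u, \sum_(i < N) A i j u = 1) ->
  (forall i u y, 0 <= B i u y) ->
  (forall i u, measurable_fun setT (B i u)) ->
  (forall i u, (\int[mu]_y (B i u y)%:E = 1)%E) ->
  (forall i, 0 <= cT i) ->
  (forall k i u, 0 <= c k i u) ->
  forall k : nat, (k <= T)%N -> concave_on_simplex (J A B mu u0 cT c T k).
Proof.
move=> A_ge0 A_sum1 B_ge0 B_meas B_int1 cT_ge0 c_ge0 k _.
exact: (value_function_concave_bounded u0 A_ge0 A_sum1 B_ge0 B_meas B_int1
  cT_ge0 c_ge0 (T - k) k).1.
Qed.
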